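(* Let $\mathbf{A}\in\mathbb{R}^{m\times n}$ be $s$-regular, where $s$ is an integer with $0<s<n$, let $\mathbf{b}\in\mathbb{R}^m$, and let $f(\mathbf{x})=\|\mathbf{A}\mathbf{x}-\mathbf{b}\|^2$, whose gradient is Lipschitz with constant $L(f)=2\lambda_{\max}(\mathbf{A}^T\mathbf{A})$. Then any sequence generated by the IHT method with constant $L>L(f)$ converges to an $L$-stationary point of the problem (P): minimize $f(\mathbf{x})$ subject to $\|\mathbf{x}\|_0\le s$.
   Context: A matrix $\mathbf{A}$ is $s$-regular if for every $I\subseteq\{1,\dots,n\}$ with $|I|=s$ the columns of $\mathbf{A}$ indexed by $I$ are linearly independent. $C_s=\{\mathbf{x}:\|\mathbf{x}\|_0\le s\}$ where $\|\mathbf{x}\|_0$ is the number of nonzero components. $P_{C_s}(\mathbf{y})=\operatorname{argmin}_{\mathbf{x}\in C_s}\|\mathbf{x}-\mathbf{y}\|^2$ (possibly multi-valued). The IHT method with constant $L$: choose $\mathbf{x}^0\in C_s$ and for $k=0,1,2,\dots$ pick any $\mathbf{x}^{k+1}\in P_{C_s}\!\left(\mathbf{x}^k-\frac1L\nabla f(\mathbf{x}^k)\right)$. A point $\mathbf{x}^*\in C_s$ is $L$-stationary if $\mathbf{x}^*\in P_{C_s}\!\left(\mathbf{x}^*-\frac1L\nabla f(\mathbf{x}^* )\right)$. *)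

From HB Require Import structures.
From mathcomp Require Import all_boot all_order all_algebra.
From mathcomp Require Import all_classical all_reals all_analysis.
Set Implicit Arguments. Unset Strict Implicit. Unset Printing Implicit Defensive.
Import Order.TTheory GRing.Theory Num.Theory.
Import numFieldNormedType.Exports.
Local Open Scope ring_scope.
Local Open Scope classical_set_scope.

Definition sqnorm (R : realType) (n : nat) (v : 'cV[R]_n) : R :=
  \sum_(i < n) (v i 0) ^+ 2.

Definition l0norm (R : realType) (n : nat) (x : 'cV[R]_n) : nat :=
  #|[set i : 'I_n | x i 0 != 0]|.

Definition Cs (R : realType) (n s : nat) (x : 'cV[R]_n) : Prop :=
  (l0norm x <= s)%N.

(* A is s-regular: for every I with |I| = s the columns of A indexed by I are
   linearly independent, i.e. the only combination of them that is 0 is trivial. *)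
Definition s_regular (R : realType) (m n s : nat) (A : 'M[R]_(m, n)) : Prop :=
  forall I : {set 'I_n}, #|I| = s ->
    forall c : 'cV[R]_n, (forall i, i \notin I -> c i 0 = 0) ->
      A *m c = 0 -> c = 0.

(* x is an element of P_{C_s}(y) (the projection is multi-valued) *)
Definition in_proj_Cs (R : realType) (n s : nat) (y x : 'cV[R]_n) : Prop :=
  Cs s x /\ forall z : 'cV[R]_n, Cs s z -> sqnorm (x - y) <= sqnorm (z - y).

Definition lsq (R : realType) (m n : nat) (A : 'M[R]_(m, n)) (b : 'cV[R]_m)
  (x : 'cV[R]_n) : R := sqnorm (A *m x - b).

Definition grad_lsq (R : realType) (m n : nat) (A : 'M[R]_(m, n)) (b : 'cV[R]_m)
  (x : 'cV[R]_n) : 'cV[R]_n := 2%:R *: (A^T *m (A *m x - b)).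

Definition lambda_max (R : realType) (n : nat) (M : 'M[R]_n) : R :=
  sup [set a : R | eigenvalue M a].

Definition Lf (R : realType) (m n : nat) (A : 'M[R]_(m, n)) : R :=
  2%:R * lambda_max (A^T *m A).

Definition IHT_seq (R : realType) (m n s : nat) (A : 'M[R]_(m, n)) (b : 'cV[R]_m)
  (L : R) (x : nat -> 'cV[R]_n) : Prop :=
  Cs s (x 0%N) /\
  forall k, in_proj_Cs s (x k - L^-1 *: grad_lsq A b (x k)) (x k.+1).

Definition L_stationary (R : realType) (m n s : nat) (A : 'M[R]_(m, n)) (b : 'cV[R]_m)
  (L : R) (xs : 'cV[R]_n) : Prop :=
  Cs s xs /\ in_proj_Cs s (xs - L^-1 *: grad_lsq A b xs) xs.

From HB Require Import structures.
From mathcomp Require Import all_boot all_order all_algebra.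
From mathcomp Require Import all_classical all_reals all_analysis.
From mathcomp Require Import ring lra zify.
Import Order.TTheory GRing.Theory Num.Theory.
Import numFieldNormedType.Exports.
Local Open Scope ring_scope.
Local Open Scope classical_set_scope.
Set Implicit Arguments. Unset Strict Implicit. Unset Printing Implicit Defensive.

(* Since L > 2 lambda_max(A^T A), each IHT step decreases f by at least
   (L/2 - lambda_max) ||x_(k+1) - x_k||^2, so the steps tend to zero.  On the
   support S of x_(k+1) the projection does not move the gradient step; hence
   x_(k+1) solves the normal equations of least squares restricted to S up to
   an error O(||x_(k+1) - x_k||).  By s-regularity these equations have a
   unique solution, and there are finitely many supports: once the steps are
   smaller than the gaps between these solutions, the nearby solution can no
   longer change, and the iterates converge to it.  The projection inequality
   then passes to the limit.  Throughout, lambda_max(A^T A) is identified with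
   the supremum of the Rayleigh quotients ||Av||^2 / ||v||^2, which is itself
   an eigenvalue of A^T A. *)

Section Dot.
Variables (R : realType) (n : nat).
Implicit Types u v w : 'cV[R]_n.

Definition dot u v : R := \sum_(i < n) u i 0 * v i 0.

Lemma sqnormE v : sqnorm v = dot v v.
Proof. by apply: eq_bigr => i _; rewrite expr2. Qed.

Lemma dotC u v : dot u v = dot v u.
Proof. by apply: eq_bigr => i _; rewrite mulrC. Qed.

Lemma dotDl u v w : dot (u + v) w = dot u w + dot v w.
Proof. by rewrite /dot -big_split; apply: eq_bigr => i _; rewrite !mxE mulrDl. Qed.

Lemma dotDr u v w : dot w (u + v) = dot w u + dot w v.
Proof. by rewrite dotC dotDl !(dotC w). Qed.

Lemma dotZl (a : R) u v : dot (a *: u) v = a * dot u v.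
Proof. by rewrite /dot mulr_sumr; apply: eq_bigr => i _; rewrite !mxE mulrA. Qed.

Lemma dotZr (a : R) u v : dot v (a *: u) = a * dot v u.
Proof. by rewrite dotC dotZl dotC. Qed.

Lemma dotNl u v : dot (- u) v = - dot u v.
Proof. by rewrite -scaleN1r dotZl mulN1r. Qed.

Lemma dotNr u v : dot v (- u) = - dot v u.
Proof. by rewrite dotC dotNl dotC. Qed.

Lemma dotBr u v w : dot w (u - v) = dot w u - dot w v.
Proof. by rewrite dotDr dotNr. Qed.

Lemma sqnorm_ge0 v : 0 <= sqnorm v.
Proof. by apply: sumr_ge0 => i _; rewrite sqr_ge0. Qed.

Lemma sqr_coord_le_sqnorm v i : v i 0 ^+ 2 <= sqnorm v.
Proof. by rewrite /sqnorm (bigD1 i) //= lerDl; apply: sumr_ge0 => j _; apply: sqr_ge0. Qed.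

Lemma sqnorm_eq0 v : (sqnorm v == 0) = (v == 0).
Proof.
apply/eqP/eqP => [v0|->]; last by rewrite /sqnorm big1 // => i _; rewrite mxE expr0n.
apply/matrixP => i j; rewrite (ord1 j) mxE; apply/eqP; rewrite -sqrf_eq0 eq_le sqr_ge0 andbT.
by rewrite -v0 sqr_coord_le_sqnorm.
Qed.

Lemma sqnorm_gt0 v : (0 < sqnorm v) = (v != 0).
Proof. by rewrite lt_neqAle sqnorm_ge0 andbT eq_sym sqnorm_eq0. Qed.

Lemma sqnormD u v : sqnorm (u + v) = sqnorm u + 2 * dot u v + sqnorm v.
Proof. rewrite !sqnormE dotDl !dotDr (dotC v u); ring. Qed.

Lemma sqnormB u v : sqnorm (u - v) = sqnorm u - 2 * dot u v + sqnorm v.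
Proof. rewrite !sqnormE dotDl !dotDr !dotNl !dotNr (dotC v u); ring. Qed.

Lemma sqnormZ (a : R) v : sqnorm (a *: v) = a ^+ 2 * sqnorm v.
Proof. rewrite !sqnormE dotZl dotZr; ring. Qed.

Lemma sqnormN v : sqnorm (- v) = sqnorm v.
Proof. by rewrite !sqnormE dotNl dotNr opprK. Qed.

Lemma sqnormBC u v : sqnorm (u - v) = sqnorm (v - u).
Proof. by rewrite -sqnormN opprB. Qed.

Lemma cauchy_schwarz u v : dot u v ^+ 2 <= sqnorm u * sqnorm v.
Proof.
have [v0|v_neq0] := eqVneq v 0.
  rewrite v0 /dot big1 => [|i _]; last by rewrite mxE mulr0.
  by rewrite expr0n mulr_ge0 ?sqnorm_ge0.
have v_gt0 : 0 < sqnorm v by rewrite sqnorm_gt0.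
have := sqnorm_ge0 (sqnorm v *: u - dot u v *: v).
rewrite sqnormB !sqnormZ dotZl dotZr => h.
have : 0 <= sqnorm v * (sqnorm v * sqnorm u - dot u v ^+ 2) by nra.
by rewrite pmulr_rge0 // subr_ge0 mulrC.
Qed.

Lemma dot_young (eta : R) u v : 0 < eta ->
  2 * dot u v <= eta * sqnorm u + sqnorm v / eta.
Proof.
move=> eta_gt0; have := sqnorm_ge0 (eta *: u - v).
rewrite sqnormB sqnormZ dotZl => h.
rewrite -(ler_pM2l eta_gt0).
have -> : eta * (eta * sqnorm u + sqnorm v / eta) = eta ^+ 2 * sqnorm u + sqnorm v.
  by field; rewrite gt_eqF.
lra.
Qed.

Lemma sqnormB_le u v : sqnorm (u - v) <= 2 * (sqnorm u + sqnorm v).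
Proof. by have := sqnorm_ge0 (u + v); rewrite sqnormD sqnormB; lra. Qed.

Lemma sqnormD3_le u v w :
  sqnorm (u + v + w) <= 3 * (sqnorm u + sqnorm v + sqnorm w).
Proof.
rewrite !sqnormD dotDl.
have := dot_young u v ltr01; have := dot_young u w ltr01; have := dot_young v w ltr01.
rewrite !invr1 !mulr1 !mul1r; lra.
Qed.

Lemma sqnormB3_le u v w w' :
  sqnorm (u - w') <= 3 * (sqnorm (u - v) + sqnorm (v - w) + sqnorm (w - w')).
Proof.
have -> : u - w' = (u - v) + (v - w) + (w - w') by rewrite !addrA !subrK.
exact: sqnormD3_le.
Qed.

End Dot.

Section MulMx.
Variable R : realType.

Lemma dot_mulmx p n (P : 'M[R]_(p, n)) (u : 'cV[R]_n) (v : 'cV[R]_p) :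
  dot (P *m u) v = dot u (P^T *m v).
Proof.
rewrite /dot; under eq_bigr do rewrite mxE mulr_suml.
rewrite exchange_big /=; apply: eq_bigr => j _.
by rewrite mxE mulr_sumr; apply: eq_bigr => i _; rewrite !mxE mulrCA mulrA.
Qed.

Definition sqfrob p n (P : 'M[R]_(p, n)) : R := \sum_(i < p) \sum_(j < n) P i j ^+ 2.

Lemma sqfrob_ge0 p n (P : 'M[R]_(p, n)) : 0 <= sqfrob P.
Proof. by apply: sumr_ge0 => i _; apply: sumr_ge0 => j _; apply: sqr_ge0. Qed.

Lemma sqnorm_mulmx_le p n (P : 'M[R]_(p, n)) (v : 'cV[R]_n) :
  sqnorm (P *m v) <= sqfrob P * sqnorm v.
Proof.
rewrite /sqnorm /sqfrob mulr_suml; apply: ler_sum => i _.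
have -> : (P *m v) i 0 = dot (\col_j P i j) v.
  by rewrite mxE; apply: eq_bigr => j _; rewrite mxE.
have -> : \sum_(j < n) P i j ^+ 2 = sqnorm (\col_j P i j).
  by apply: eq_bigr => j _; rewrite mxE.
exact: cauchy_schwarz.
Qed.

End MulMx.

Section PsdCoercive.
Variables (R : realType) (n : nat) (N : 'M[R]_n).
Hypothesis N_sym : N^T = N.
Hypothesis N_psd : forall w : 'cV[R]_n, 0 <= dot w (N *m w).

Lemma sqnorm_mulmx_le_psd (c : R) : 0 < c ->
    (forall w, dot w (N *m w) <= c * sqnorm w) ->
  forall v, sqnorm (N *m v) <= c * dot v (N *m v).
Proof.
move=> c_gt0 hc v.
(* evaluate the quadratic form at v - Nv / c *)
have := N_psd (v - c^-1 *: (N *m v)).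
rewrite mulmxBr -scalemxAr dotDl !dotBr !dotNl !dotZl !dotZr -sqnormE.
have -> : dot v (N *m (N *m v)) = sqnorm (N *m v).
  by rewrite -{1}N_sym -dot_mulmx sqnormE.
have := hc (N *m v); set q := dot v (N *m v); set B := sqnorm (N *m v).
set Q := dot (N *m v) (N *m (N *m v)) => hQ h.
have hQ' : c^-1 * (c^-1 * Q) <= c^-1 * B.
  by rewrite ler_pM2l ?invr_gt0 // ler_pdivrMl.
have : 0 <= q - c^-1 * B by lra.
by rewrite subr_ge0 ler_pdivrMl.
Qed.

Lemma psd_unitmx_coercive : N \in unitmx ->
  exists2 e : R, 0 < e & forall w, e * sqnorm w <= dot w (N *m w).
Proof.
move=> N_unit.
have hc : forall w, dot w (N *m w) <= (1 + sqfrob N) * sqnorm w.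
  move=> w; have := dot_young w (N *m w) ltr01.
  have := sqnorm_mulmx_le N w; have := N_psd w; have := sqnorm_ge0 w.
  rewrite invr1 !mulr1 mul1r; nra.
have c_gt0 : 0 < 1 + sqfrob N by have := sqfrob_ge0 N; lra.
set k := (1 + sqfrob (invmx N)) * (1 + sqfrob N).
have k_gt0 : 0 < k by rewrite mulr_gt0 // ltr_pwDl // sqfrob_ge0.
exists k^-1; rewrite ?invr_gt0 // => w.
rewrite ler_pdivrMl // /k -mulrA.
have := sqnorm_mulmx_le (invmx N) (N *m w); rewrite mulKmx // => hw.
apply: le_trans hw _; apply: (@le_trans _ _ ((1 + sqfrob (invmx N)) * sqnorm (N *m w))).
  by rewrite ler_wpM2r ?sqnorm_ge0 // lerDr.
by rewrite ler_wpM2l ?addr_ge0 ?sqfrob_ge0 // sqnorm_mulmx_le_psd.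
Qed.

End PsdCoercive.

Section Rayleigh.
Variables (R : realType) (m n : nat) (A : 'M[R]_(m, n)).
Hypothesis n_gt0 : (0 < n)%N.

Definition rayleigh_quotients : set R :=
  [set r | exists2 v : 'cV[R]_n, v != 0 & r = sqnorm (A *m v) / sqnorm v].

Let mu := sup rayleigh_quotients.

Let one_neq0 : (const_mx 1 : 'cV[R]_n) != 0.
Proof.
apply/eqP => /matrixP /(_ (Ordinal n_gt0) 0); rewrite !mxE => /eqP.
by rewrite oner_eq0.
Qed.

Let one_quotient : rayleigh_quotients
  (sqnorm (A *m const_mx 1) / sqnorm (const_mx 1 : 'cV[R]_n)).
Proof. by exists (const_mx 1). Qed.

Lemma rayleigh_has_sup : has_sup rayleigh_quotients.
Proof.
split; first by eexists; exact: one_quotient.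
exists (sqfrob A) => r [v v_neq0 ->].
by rewrite ler_pdivrMr ?sqnorm_gt0 // sqnorm_mulmx_le.
Qed.

Lemma rayleigh_sup_ge0 : 0 <= mu.
Proof.
apply: le_trans (ub_le_sup rayleigh_has_sup.2 one_quotient).
by rewrite divr_ge0 ?sqnorm_ge0.
Qed.

Lemma sqnorm_mulmx_le_rayleigh_sup (v : 'cV[R]_n) : sqnorm (A *m v) <= mu * sqnorm v.
Proof.
have [->|v_neq0] := eqVneq v 0.
  by rewrite mulmx0 /sqnorm !big1 ?mulr0 // => i _; rewrite mxE expr0n.
rewrite -ler_pdivrMr ?sqnorm_gt0 //.
by apply: (ub_le_sup rayleigh_has_sup.2); exists v.
Qed.

Lemma eigenvalue_le_rayleigh_sup a : eigenvalue (A^T *m A) a -> a <= mu.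
Proof.
case/eigenvalueP => v hv v_neq0.
have vT_neq0 : v^T != 0 by apply: contra v_neq0 => /eqP h; rewrite -(trmxK v) h linear0.
have Mv : A^T *m A *m v^T = a *: v^T.
  by rewrite -[A^T *m A]trmxK trmx_mul trmxK -trmx_mul hv linearZ.
rewrite -(ler_pM2r (_ : 0 < sqnorm v^T)) ?sqnorm_gt0 //.
apply: le_trans (sqnorm_mulmx_le_rayleigh_sup _).
by rewrite [sqnorm (A *m _)]sqnormE dot_mulmx mulmxA Mv dotZr sqnormE.
Qed.

Lemma rayleigh_sup_eigenvalue : eigenvalue (A^T *m A) mu.
Proof.
have [//|mu_not_eig] := boolP (eigenvalue (A^T *m A) mu); exfalso.
set N := mu%:M - A^T *m A.
have N_sym : N^T = N by rewrite /N linearB /= tr_scalar_mx trmx_mul trmxK.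
have NE w : dot w (N *m w) = mu * sqnorm w - sqnorm (A *m w).
  by rewrite /N mulmxBl mul_scalar_mx dotBr dotZr -mulmxA -dot_mulmx !sqnormE.
have N_psd w : 0 <= dot w (N *m w).
  by rewrite NE subr_ge0 sqnorm_mulmx_le_rayleigh_sup.
have N_unit : N \in unitmx.
  rewrite unitmxE unitfE; apply: contra mu_not_eig => /det0P [v v_neq0 hv].
  apply/eigenvalueP; exists v => //.
  by move/eqP: hv; rewrite /N mulmxBr subr_eq0 mul_mx_scalar => /eqP <-.
have [e e_gt0 he] := psd_unitmx_coercive N_sym N_psd N_unit.
suff : mu <= mu - e by lra.
apply: ge_sup; first by eexists; exact: one_quotient.
move=> _ [v v_neq0 ->]; rewrite ler_pdivrMr ?sqnorm_gt0 //.
by have := he v; rewrite NE; lra.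
Qed.

Lemma lambda_max_rayleigh : lambda_max (A^T *m A) = mu.
Proof.
apply/eqP; rewrite eq_le; apply/andP; split.
  by apply: ge_sup; [exists mu; exact: rayleigh_sup_eigenvalue | exact: eigenvalue_le_rayleigh_sup].
apply: ub_le_sup; last exact: rayleigh_sup_eigenvalue.
by exists mu => a; apply: eigenvalue_le_rayleigh_sup.
Qed.

End Rayleigh.

Lemma sqnorm_mulmx_le_lambda_max (R : realType) m n (A : 'M[R]_(m, n)) (v : 'cV[R]_n) :
  (0 < n)%N -> sqnorm (A *m v) <= lambda_max (A^T *m A) * sqnorm v.
Proof. by move=> n_gt0; rewrite lambda_max_rayleigh // sqnorm_mulmx_le_rayleigh_sup. Qed.

Lemma lambda_max_ge0 (R : realType) m n (A : 'M[R]_(m, n)) :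
  (0 < n)%N -> 0 <= lambda_max (A^T *m A).
Proof. by move=> n_gt0; rewrite lambda_max_rayleigh // rayleigh_sup_ge0. Qed.

Section Vanishing.
Variable R : realType.

Definition vanishing (u : nat -> R) :=
  forall e, 0 < e -> exists N, forall k, (N <= k)%N -> u k < e.

Lemma vanishingS (u : nat -> R) : vanishing (fun k => u k.+1) <-> vanishing u.
Proof.
split=> hu e e_gt0; have [N hN] := hu e e_gt0.
  by exists N.+1 => -[|k] // hk; apply: hN.
by exists N => k hk; apply: hN; apply: leqW.
Qed.

Lemma vanishing_le (u v : nat -> R) (c : R) (N : nat) : 0 <= c ->
  (forall k, (N <= k)%N -> v k <= c * u k) -> vanishing u -> vanishing v.
Proof.
move=> c_ge0 hvu hu e e_gt0.
have [N' hN'] := hu (e / (c + 1)) (divr_gt0 e_gt0 (ltr_wpDl c_ge0 ltr01)).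
exists (maxn N N') => k; rewrite geq_max => /andP[hNk hN'k].
apply: le_lt_trans (hvu k hNk) _.
apply: le_lt_trans (_ : c * (e / (c + 1)) < e).
  by rewrite ler_wpM2l // ltW // hN'.
by rewrite mulrA ltr_pdivrMr; [nra | lra].
Qed.

Lemma vanishingD (u v : nat -> R) :
  vanishing u -> vanishing v -> vanishing (fun k => u k + v k).
Proof.
move=> hu hv e e_gt0.
have [N1 hN1] := hu (e / 2) (divr_gt0 e_gt0 (ltr0Sn _ 1)).
have [N2 hN2] := hv (e / 2) (divr_gt0 e_gt0 (ltr0Sn _ 1)).
exists (maxn N1 N2) => k; rewrite geq_max => /andP[h1 h2].
by have := hN1 k h1; have := hN2 k h2; lra.
Qed.

Lemma vanishing_sufficient_decrease (f d : nat -> R) (gam : R) : 0 < gam ->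
  (forall k, 0 <= f k) -> (forall k, f k.+1 <= f k - gam * d k) ->
  (forall k, 0 <= d k) -> vanishing d.
Proof.
move=> gam_gt0 f_ge0 f_decr d_ge0 e e_gt0.
have f_noninc k j : (k <= j)%N -> f j <= f k.
  move=> /subnK <-; elim: (j - k)%N => [|i IH]; rewrite ?add0n // addSn.
  by apply: le_trans IH; have := f_decr (i + k)%N; have := d_ge0 (i + k)%N; nra.
(* [- f] is bounded above, so its values eventually stall within [gam * e] of the supremum *)
set E := [set r | exists k, r = - f k].
have E_sup : has_sup E.
  split; first by exists (- f 0%N); exists 0%N.
  by exists 0 => _ [k ->]; rewrite oppr_le0.
have [_ [N ->] hN] := sup_adherent (mulr_gt0 gam_gt0 e_gt0) E_sup.
exists N => k hk.
have : - f k.+1 <= sup E by apply: (ub_le_sup E_sup.2); exists k.+1.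
have := f_noninc N k hk; have := f_decr k.
by rewrite -(ltr_pM2l gam_gt0); lra.
Qed.

Lemma fin_gt0_lbound (T : finType) (F : T -> R) :
  exists2 e : R, 0 < e & forall t, 0 < F t -> e < F t.
Proof.
set G := fun t => if 0 < F t then (F t)^-1 else 0.
have G_ge0 t : 0 <= G t by rewrite /G; case: ifP => // /ltW; rewrite invr_ge0.
have sumG_ge0 : 0 <= \sum_t G t by apply: sumr_ge0.
exists (1 + \sum_t G t)^-1; first by rewrite invr_gt0; lra.
move=> t Ft_gt0.
have : G t <= \sum_t G t by rewrite (bigD1 t) //= lerDl sumr_ge0.
rewrite /G Ft_gt0 => hG.
by rewrite -ltf_pV2 ?posrE ?invr_gt0 ?invrK //; lra.
Qed.

Variable n : nat.
Implicit Types x e f : nat -> 'cV[R]_n.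

Lemma vanishing_cvg x (q : 'cV[R]_n) :
  vanishing (fun k => sqnorm (x k - q)) -> x @ \oo --> q.
Proof.
move=> hx; apply/cvgrPdist_lt => e e_gt0.
have [N hN] := hx (e ^+ 2) (exprn_gt0 _ e_gt0).
exists N => // k /= hk; change (mx_norm (q - x k) < e).
have [->|/mx_norm_neq0 [[i j] ->]] := eqVneq (mx_norm (q - x k)) 0; first by [].
rewrite /= (ord1 j) -(ltr_pXn2r (_ : (0 < 2)%N)) ?nnegrE ?normr_ge0 ?ltW //.
rewrite real_normK ?num_real //; apply: le_lt_trans (hN k hk).
by rewrite sqnormBC sqr_coord_le_sqnorm.
Qed.

Lemma sqnorm_le_vanishing (w u : 'cV[R]_n) e f :
  (forall k, sqnorm (w + e k) <= sqnorm (u + f k)) ->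
  vanishing (fun k => sqnorm (e k)) -> vanishing (fun k => sqnorm (f k)) ->
  sqnorm w <= sqnorm u.
Proof.
move=> hwu he hf; apply/ler_addgt0Pr => d d_gt0.
set W := sqnorm w; set U := sqnorm u.
have W_ge0 : 0 <= W by apply: sqnorm_ge0.
have U_ge0 : 0 <= U by apply: sqnorm_ge0.
set eta := d / (2 * (W + U + 1)).
have eta_gt0 : 0 < eta by rewrite divr_gt0 //; lra.
have etaE : eta * (2 * (W + U + 1)) = d by rewrite /eta; field; lra.
set eps := eta * d / (4 * (1 + eta)).
have eps_gt0 : 0 < eps by apply: divr_gt0; [exact: mulr_gt0 | lra].
have epsE : eps * (4 * (1 + eta)) = eta * d by rewrite /eps; field; lra.
have [K hK] := vanishingD he hf eps_gt0.
have hKf : sqnorm (f K) < eps.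
  by apply: le_lt_trans (hK K (leqnn K)); rewrite lerDr sqnorm_ge0.
have {}hK := hK K (leqnn K).
set E := sqnorm (e K) in hK; set F := sqnorm (f K) in hK hKf.
(* expand both squares and absorb the cross terms by Young's inequality with weight [eta] *)
have := hwu K; rewrite !sqnormD -/W -/U -/E -/F => h.
have h1 := dot_young u (f K) eta_gt0.
have h2 := dot_young w (- e K) eta_gt0; rewrite dotNr sqnormN -/E -/F -/W -/U in h1 h2.
have hEF : (E + F) / eta <= d / 2 - eps.
  by rewrite ler_pdivrMr //; nra.
have hEF' : E / eta + F / eta = (E + F) / eta by rewrite mulrDl.
have hWU : eta * W + eta * U + eta = d / 2 by rewrite -etaE; field.
have E_ge0 : 0 <= E by apply: sqnorm_ge0.
lra.
Qed.

Lemma vanishing_finite_attractors (T : finType) (g : T -> 'cV[R]_n) x (sel : nat -> T)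
    (C : R) : 0 <= C ->
  vanishing (fun k => sqnorm (x k.+1 - x k)) ->
  (forall k, sqnorm (x k.+1 - g (sel k)) <= C * sqnorm (x k.+1 - x k)) ->
  exists q, vanishing (fun k => sqnorm (x k - q)).
Proof.
move=> C_ge0 dx hg.
have [gap gap_gt0 hgap] := fin_gt0_lbound (fun tt : T * T => sqnorm (g tt.1 - g tt.2)).
have C3_gt0 : 0 < 3 * (2 * C + 1) by lra.
have [N hN] := dx (gap / (3 * (2 * C + 1))) (divr_gt0 gap_gt0 C3_gt0).
have gapE : 3 * (2 * C + 1) * (gap / (3 * (2 * C + 1))) = gap by field; lra.
(* two distinct attractors are [gap] apart, while consecutive ones are close once the steps are small *)
have g_stable k : (N <= k)%N -> g (sel k.+1) = g (sel k).
  move=> hk; apply/eqP; apply: contraT => g_neq.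
  have := hgap (sel k.+1, sel k); rewrite /= sqnorm_gt0 subr_eq0 => /(_ g_neq).
  have := sqnormB3_le (g (sel k.+1)) (x k.+2) (x k.+1) (g (sel k)).
  rewrite [sqnorm (g _ - x _)]sqnormBC [sqnorm (x k.+1 - g _)]sqnormBC.
  have := hg k.+1; have := hg k; rewrite [sqnorm (x k.+1 - g _)]sqnormBC.
  have := hN k hk; have := hN k.+1 (leqW hk).
  set e0 := gap / _ in gapE *.
  move=> h1 h2 h3 h4 h5 h6.
  have : C * sqnorm (x k.+2 - x k.+1) <= C * e0 by rewrite ler_wpM2l // ltW.
  have : C * sqnorm (x k.+1 - x k) <= C * e0 by rewrite ler_wpM2l // ltW.
  lra.
have g_const k : (N <= k)%N -> g (sel k) = g (sel N).
  by move/subnK <-; elim: (k - N)%N => // j IH; rewrite addSn g_stable ?IH // leq_addl.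
exists (g (sel N)); apply/vanishingS; apply: (vanishing_le (N := N) C_ge0 _ dx).
by move=> k hk; rewrite -(g_const k hk).
Qed.

End Vanishing.

Section SparseProjection.
Variables (R : realType) (n s : nat).
Implicit Types v x y z : 'cV[R]_n.

Definition supp v : {set 'I_n} := [set i | v i 0 != 0]%SET.

Lemma l0norm_supp v : l0norm v = #|supp v|.
Proof. by apply: eq_card => i; rewrite !inE; apply/asboolP/idP. Qed.

Lemma l0norm_le z x : (forall i, z i 0 != 0 -> x i 0 != 0) -> (l0norm z <= l0norm x)%N.
Proof.
move=> h; rewrite !l0norm_supp; apply: subset_leq_card.
by apply/fintype.subsetP => i; rewrite !inE; apply: h.
Qed.

Lemma in_proj_Cs_coord y x i : in_proj_Cs s y x -> x i 0 != 0 -> x i 0 = y i 0.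
Proof.
move=> [xC x_min] xi_neq0.
(* resetting coordinate [i] of [x] to [y i 0] keeps the support, so it cannot beat [x] *)
set z := \col_j (if j == i then y i 0 else x j 0).
have zC : Cs s z.
  by apply: leq_trans xC; apply: l0norm_le => j; rewrite mxE; case: (eqVneq j i) => [->|].
have := x_min z zC.
rewrite /sqnorm (bigD1 i) //= [X in _ <= X](bigD1 i) //= !mxE eqxx subrr expr0n add0r.
rewrite [X in _ <= X](eq_bigr (fun j => (x - y) j 0 ^+ 2)); last first.
  by move=> j j_neq; rewrite !mxE (negbTE j_neq).
set S := \sum_(j | _) _ => h.
suff : (x i 0 - y i 0) ^+ 2 == 0 by rewrite sqrf_eq0 subr_eq0 => /eqP.
by rewrite eq_le sqr_ge0 andbT; lra.
Qed.

Lemma Cs_vanishing (x : nat -> 'cV[R]_n) q :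
  (forall k, Cs s (x k)) -> vanishing (fun k => sqnorm (x k - q)) -> Cs s q.
Proof.
move=> xC xq.
have [e e_gt0 he] := fin_gt0_lbound (fun i : 'I_n => q i 0 ^+ 2).
have [K hK] := xq e e_gt0.
apply: leq_trans (xC K); apply: l0norm_le => i qi_neq0; apply: contraTneq (hK K (leqnn K)).
move=> xi0; rewrite -leNgt; apply: le_trans (sqr_coord_le_sqnorm _ i).
by rewrite !mxE xi0 sub0r sqrrN ltW // he // lt_neqAle sqr_ge0 andbT eq_sym sqrf_eq0.
Qed.

End SparseProjection.

Section LeastSquares.
Variables (R : realType) (m n s : nat) (A : 'M[R]_(m, n)) (b : 'cV[R]_m).
Implicit Types x y z v : 'cV[R]_n.

Definition grad_step (L : R) x := x - L^-1 *: grad_lsq A b x.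

Lemma lsq_sufficient_decrease (L mu : R) x x' : 0 < L ->
    (forall v, sqnorm (A *m v) <= mu * sqnorm v) ->
    Cs s x -> in_proj_Cs s (grad_step L x) x' ->
  lsq A b x' <= lsq A b x - (L / 2 - mu) * sqnorm (x' - x).
Proof.
move=> L_gt0 hmu xC [_ x'_min].
set d := x' - x; set r := A *m x - b; set q := dot (A *m d) r.
set g := L^-1 *: grad_lsq A b x; rewrite /grad_step -/g in x'_min.
have fE : lsq A b x' = lsq A b x + 2 * q + sqnorm (A *m d).
  rewrite /lsq -/r /q dotC -sqnormD /d mulmxBr /r; congr sqnorm.
  by rewrite [RHS]addrC addrA subrK.
have gE : 2 * dot d g = 4 / L * q.
  by rewrite /g /grad_lsq !dotZr -dot_mulmx -/r -/q; ring.
(* [x'] is at least as close to the gradient step as [x] is *)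
have := x'_min x xC.
have -> : x' - (x - g) = d + g by rewrite opprB addrA addrAC.
have -> : x - (x - g) = g by rewrite opprB addrC subrK.
rewrite sqnormD gE => hd.
have hLd : L * sqnorm d + 4 * q <= 0.
  have <- : L * (sqnorm d + 4 / L * q) = L * sqnorm d + 4 * q.
    by field; rewrite gt_eqF.
  by rewrite pmulr_rle0 //; lra.
rewrite fE; have := hmu d; lra.
Qed.

Lemma grad_step_subE (L : R) x y :
  grad_step L x - grad_step L y =
  (1%:M - (L^-1 * 2) *: (A^T *m A)) *m (x - y).
Proof.
rewrite mulmxBl mul1mx -scalemxAl.
have -> : A^T *m A *m (x - y) = A^T *m (A *m x - b) - A^T *m (A *m y - b).
  by rewrite -mulmxBr -mulmxA; congr (_ *m _); rewrite mulmxBr opprB addrA subrK.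
rewrite /grad_lsq.
by apply/matrixP => i j; rewrite !mxE; ring.
Qed.

Lemma lsq_grad_on_supp (L : R) x x' i : 0 < L ->
    in_proj_Cs s (grad_step L x) x' -> x' i 0 != 0 ->
  (A^T *m (A *m x' - b)) i 0 = ((A^T *m A - (L / 2)%:M) *m (x' - x)) i 0.
Proof.
move=> L_gt0 x'_proj x'i_neq0; have := in_proj_Cs_coord x'_proj x'i_neq0.
have -> : A *m x' - b = (A *m x - b) + A *m (x' - x).
  by rewrite mulmxBr [RHS]addrC addrA subrK.
rewrite mulmxDr mulmxBl mul_scalar_mx mulmxA /grad_step /grad_lsq !mxE => ->.
by field; rewrite gt_eqF.
Qed.

Lemma IHT_seq_Cs (L : R) (x : nat -> 'cV[R]_n) : IHT_seq s A b L x -> forall k, Cs s (x k).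
Proof. by case=> x0C xproj; elim=> // k _; case: (xproj k). Qed.

Lemma IHT_seq_limit_L_stationary (L : R) (x : nat -> 'cV[R]_n) q : IHT_seq s A b L x ->
  vanishing (fun k => sqnorm (x k - q)) -> L_stationary s A b L q.
Proof.
move=> x_iht xq; have qC := Cs_vanishing (IHT_seq_Cs x_iht) xq.
split=> //; split=> // z zC; rewrite -/(grad_step L q).
set T := 1%:M - (L^-1 * 2) *: (A^T *m A).
set y := grad_step L.
have yq : vanishing (fun k => sqnorm (y (x k) - y q)).
  apply: (vanishing_le (N := 0) (sqfrob_ge0 T) _ xq) => k _.
  by rewrite grad_step_subE sqnorm_mulmx_le.
(* pass to the limit in the optimality of [x k.+1] for the step from [x k] *)
apply: (sqnorm_le_vanishing (e := fun k => (x k.+1 - q) - (y (x k) - y q))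
                            (f := fun k => - (y (x k) - y q))).
- move=> k; have := (x_iht.2 k).2 z zC; rewrite -/(grad_step L (x k)) -/y.
  have -> : q - y q + (x k.+1 - q - (y (x k) - y q)) = x k.+1 - y (x k).
    by apply/matrixP => i j; rewrite !mxE; ring.
  have -> : z - y q + - (y (x k) - y q) = z - y (x k).
    by apply/matrixP => i j; rewrite !mxE; ring.
  by [].
- have xq1 := (vanishingS (fun k => sqnorm (x k - q))).2 xq.
  apply: (vanishing_le (N := 0) (c := 2) _ _ (vanishingD xq1 yq)) => // k _.
  exact: sqnormB_le.
- by apply: (vanishing_le (N := 0) ler01 _ yq) => k _; rewrite sqnormN mul1r.
Qed.

End LeastSquares.

Lemma subset_card_ext (T : finType) (S : {set T}) k :
  (#|S| <= k <= #|T|)%N -> exists2 I : {set T}, S \subset I & #|I| = k.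
Proof.
case/andP=> hS hT.
have : (0 < #|[set D : {set T} | D \subset ~: S & #|D| == (k - #|S|)%N]|)%N.
  by rewrite cards_draws bin_gt0 cardsCs; lia.
case/card_gt0P=> D; rewrite inE => /andP[sDS /eqP cD].
exists (S :|: D); first exact: finset.subsetUl.
have SD0 : S :&: D = finset.set0 by apply/eqP; rewrite finset.setI_eq0 disjoint_sym finset.disjoints_subset.
by rewrite cardsU SD0 cards0 subn0 cD; lia.
Qed.

Section RestrictedLeastSquares.
Variables (R : realType) (m n s : nat) (A : 'M[R]_(m, n)) (b : 'cV[R]_m).
Hypothesis A_sreg : s_regular s A.
Hypothesis s_le_n : (s <= n)%N.
Implicit Types (S : {set 'I_n}) (v x : 'cV[R]_n).

Definition coord_proj S : 'M[R]_n := diag_mx (\row_i (i \in S)%:R).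

Lemma coord_projE S v i : (coord_proj S *m v) i 0 = if i \in S then v i 0 else 0.
Proof. by rewrite mul_diag_mx !mxE; case: (i \in S); rewrite ?mul1r ?mul0r. Qed.

Lemma coord_proj_id S v : (forall i, i \notin S -> v i 0 = 0) -> coord_proj S *m v = v.
Proof.
move=> vS; apply/matrixP => i j; rewrite (ord1 j) coord_projE.
by case: ifPn => // /vS ->.
Qed.

Lemma sqnorm_coord_proj_le S v : sqnorm (coord_proj S *m v) <= sqnorm v.
Proof.
apply: ler_sum => i _; rewrite coord_projE.
by case: (i \in S); rewrite ?expr0n ?sqr_ge0.
Qed.

(* The normal equations of least squares over vectors supported in [S], padded
   by the identity off [S] so that they form a square system. *)
Definition normal_mx S : 'M[R]_n :=
  coord_proj S *m (A^T *m A *m coord_proj S) + (1%:M - coord_proj S).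

Definition lsq_on S : 'cV[R]_n :=
  invmx (normal_mx S) *m (coord_proj S *m (A^T *m b)).

Lemma normal_mxE S v i : (normal_mx S *m v) i 0 =
  if i \in S then (A^T *m A *m (coord_proj S *m v)) i 0 else v i 0.
Proof.
rewrite /normal_mx mulmxDl -mulmxA mulmxBl mul1mx [LHS]mxE [X in _ + X]mxE.
rewrite -[_ *m coord_proj S *m v]mulmxA [X in _ + (_ + X)]mxE !coord_projE.
by case: (i \in S); rewrite ?subrr ?addr0 ?add0r ?subr0.
Qed.

Lemma normal_mx_unit S : (#|S| <= s)%N -> normal_mx S \in unitmx.
Proof.
move=> S_le_s.
have [I SI I_card] : exists2 I : {set 'I_n}, S \subset I & #|I| = s.
  by apply: subset_card_ext; rewrite S_le_s card_ord.
rewrite unitmxE unitfE; apply/negP => /det0P [v v_neq0 hv].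
have N_sym : (normal_mx S)^T = normal_mx S.
  by rewrite /normal_mx linearD /= !trmx_mul linearB /= trmx1 trmxK tr_diag_mx !mulmxA.
set w := v^T.
have Nw : normal_mx S *m w = 0 by rewrite /w -N_sym -trmx_mul hv linear0.
have Nw_coord i : (normal_mx S *m w) i 0 = 0 by rewrite Nw mxE.
have wS i : i \notin S -> w i 0 = 0 by move=> iS; rewrite -(Nw_coord i) normal_mxE (negbTE iS).
have Pw : coord_proj S *m w = w by apply: coord_proj_id.
have Aw : A *m w = 0.
  apply/eqP; rewrite -sqnorm_eq0 sqnormE dot_mulmx /dot big1 // => i _.
  have [iS|iS] := boolP (i \in S); last by rewrite wS // mul0r.
  by have := Nw_coord i; rewrite normal_mxE iS Pw -mulmxA => ->; rewrite mulr0.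
have w0 : w = 0.
  apply: (A_sreg I_card) => // i iI; apply: wS; apply: contra iI.
  exact: (fintype.subsetP SI).
by move/eqP: v_neq0; apply; rewrite -(trmxK v) -/w w0 linear0.
Qed.

Lemma sqnorm_sub_lsq_on_le S x : (#|S| <= s)%N -> (forall i, i \notin S -> x i 0 = 0) ->
  sqnorm (x - lsq_on S) <=
    sqfrob (invmx (normal_mx S)) * sqnorm (coord_proj S *m (A^T *m (A *m x - b))).
Proof.
move=> S_le_s xS; have N_unit := normal_mx_unit S_le_s.
have Px := coord_proj_id xS.
suff -> : x - lsq_on S = invmx (normal_mx S) *m (coord_proj S *m (A^T *m (A *m x - b))).
  exact: sqnorm_mulmx_le.
rewrite -[LHS](mulKmx N_unit); congr (_ *m _).
rewrite mulmxBr /lsq_on mulKVmx // /normal_mx mulmxDl -!mulmxA Px mulmxBl mul1mx Px.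
by rewrite subrr addr0 !mulmxBr !mulmxA.
Qed.

Lemma iht_step_near_lsq_on (L : R) : 0 < L ->
  exists2 C : R, 0 <= C & forall x x',
    in_proj_Cs s (grad_step A b L x) x' ->
    sqnorm (x' - lsq_on (supp x')) <= C * sqnorm (x' - x).
Proof.
move=> L_gt0; set P := A^T *m A - (L / 2)%:M.
set CN := \sum_(S : {set 'I_n}) sqfrob (invmx (normal_mx S)).
exists (CN * sqfrob P); first by rewrite mulr_ge0 ?sqfrob_ge0 ?sumr_ge0 // => S _; apply: sqfrob_ge0.
move=> x x' x'_proj.
have supp_le : (#|supp x'| <= s)%N by rewrite -l0norm_supp; case: x'_proj.
have x'_supp i : i \notin supp x' -> x' i 0 = 0 by rewrite inE negbK => /eqP.
apply: le_trans (sqnorm_sub_lsq_on_le supp_le x'_supp) _.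
rewrite -mulrA; apply: ler_pM; rewrite ?sqfrob_ge0 ?sqnorm_ge0 //.
  by rewrite /CN (bigD1 (supp x')) //= lerDl sumr_ge0 // => S _; apply: sqfrob_ge0.
(* on the support of [x'] the residual gradient is a fixed linear image of the step *)
have -> : coord_proj (supp x') *m (A^T *m (A *m x' - b)) =
          coord_proj (supp x') *m (P *m (x' - x)).
  apply/matrixP => i j; rewrite (ord1 j) !coord_projE; case: ifPn => // hi.
  by apply: (lsq_grad_on_supp L_gt0 x'_proj); move: hi; rewrite inE.
exact: le_trans (sqnorm_coord_proj_le _ _) (sqnorm_mulmx_le _ _).
Qed.

End RestrictedLeastSquares.

Theorem theorem3p2 (R : realType) (m n s : nat) (A : 'M[R]_(m, n))
  (b : 'cV[R]_m) (L : R) (x : nat -> 'cV[R]_n) :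
  (0 < s)%N -> (s < n)%N -> s_regular s A ->
  Lf A < L -> IHT_seq s A b L x ->
  exists xs : 'cV[R]_n, L_stationary s A b L xs /\ x @ \oo --> xs.
Proof.
move=> s_gt0 s_lt_n A_sreg L_gt x_iht.
have n_gt0 : (0 < n)%N by apply: leq_trans s_lt_n.
have mu_ge0 := lambda_max_ge0 A n_gt0.
have L_gt0 : 0 < L by move: L_gt; rewrite /Lf; lra.
have dx : vanishing (fun k => sqnorm (x k.+1 - x k)).
  apply: (vanishing_sufficient_decrease (f := fun k => lsq A b (x k))
                                        (gam := L / 2 - lambda_max (A^T *m A))).
  - by move: L_gt; rewrite /Lf; lra.
  - by move=> k; apply: sqnorm_ge0.
  - move=> k; apply: (lsq_sufficient_decrease L_gt0 _ (IHT_seq_Cs x_iht k) (x_iht.2 k)).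
    by move=> v; apply: sqnorm_mulmx_le_lambda_max.
  - by move=> k; apply: sqnorm_ge0.
have [C C_ge0 hC] := iht_step_near_lsq_on b A_sreg (ltnW s_lt_n) L_gt0.
have [q xq] := vanishing_finite_attractors (g := lsq_on A b)
  (sel := fun k => supp (x k.+1)) C_ge0 dx (fun k => hC _ _ (x_iht.2 k)).
by exists q; split; [exact: IHT_seq_limit_L_stationary xq | exact: vanishing_cvg].
Qed.
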